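(* Let $B\subseteq X$ be a ranked set whose rank $\rho(B)$ is the maximum rank $k=\max\{\rho(x)\mid x\in X\}$ of $\Sigma$. Then $B^{\nearrow\nearrow}=\{C\}$ where $C=\{x\in X \mid \rho(x)\leq \rho(B),\ x\not\in B\}$.
   Context: Let $(X,\Sigma)$ be a ranked unit implicational base (implications $A\rightarrow b$ with $b\in X$, $A\subseteq X$) with rank function $\rho:X\rightarrow\mathbb{N}$, meaning that whenever $A\rightarrow b\in\Sigma$ and $a\in A$ then $\rho(a)=\rho(b)+1$; in particular $\Sigma$ is acyclic. Without loss of generality $\Sigma$ is the critical base (the unique irredundant implicational base of minimal generators) of the associated convex geometry. Let $\phi$ be its closure operator and $\C_\Sigma$ its family of closed sets. For $B\subseteq X$, define $B^{\nearrow\nearrow}=\max_\subseteq\{C\in\C_\Sigma \mid C\cap B=\emptyset\}$, the inclusion-maximal closed sets disjoint from $B$. A set $B\subseteq X$ is ranked if all its elements have the same rank, denoted $\rho(B)$. *)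

From mathcomp Require Import all_boot.
Set Implicit Arguments. Unset Strict Implicit. Unset Printing Implicit Defensive.

(* A unit implication A -> b over the finite ground set T. *)
Definition implication (T : finType) := ({set T} * T)%type.

Definition closedb (T : finType) (Sigma : {set implication T}) (C : {set T}) : bool :=
  [forall i in Sigma, (i.1 \subset C) ==> (i.2 \in C)].

Definition closed_sets (T : finType) (Sigma : {set implication T}) : {set {set T}} :=
  [set C | closedb Sigma C].

Definition phi (T : finType) (Sigma : {set implication T}) (Y : {set T}) : {set T} :=
  \bigcap_(C in closed_sets Sigma | Y \subset C) C.

Definition is_rank (T : finType) (Sigma : {set implication T}) (rho : T -> nat) : Prop :=
  forall A b, (A, b) \in Sigma -> forall a, a \in A -> rho a = (rho b).+1.

Definition convex_geometry (T : finType) (Sigma : {set implication T}) : Prop :=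
  phi Sigma set0 = set0 /\
  forall (Y : {set T}) (x y : T), x != y -> x \notin phi Sigma Y -> y \notin phi Sigma Y ->
    x \in phi Sigma (y |: Y) -> y \notin phi Sigma (x |: Y).

(* B^{↗↗}: inclusion-maximal closed sets disjoint from B. *)
Definition maxdisj (T : finType) (Sigma : {set implication T}) (B : {set T}) : {set {set T}} :=
  [set C | maxset (fun C : {set T} => (C \in closed_sets Sigma) && [disjoint C & B]) C].

Definition max_rank (T : finType) (rho : T -> nat) : nat := \max_(x : T) rho x.

From mathcomp Require Import all_boot.

Set Implicit Arguments.
Unset Strict Implicit.
Unset Printing Implicit Defensive.

(* Implications only lower the rank, so the conclusion of an implication never
   has maximal rank, and an empty premise is excluded by [phi set0 = set0].
   Hence the complement of [B] is closed, and it is then the unique maximal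
   closed set avoiding [B]. *)

Section ClosedComplement.

Variables (T : finType) (Sigma : {set implication T}).

Lemma maxdisj_closed_setC (B : {set T}) :
  closedb Sigma (~: B) -> maxdisj Sigma B = [set ~: B].
Proof.
move=> clB; apply/setP => D; rewrite !inE; apply/maxsetP/eqP.
- move=> [/andP [_ disjD] maxD]; apply/esym/maxD.
    by rewrite inE clB disjoints_subset subxx.
  by rewrite -disjoints_subset.
- move=> ->; split; first by rewrite inE clB disjoints_subset subxx.
  move=> E /andP [_ disjE] sBE; apply/eqP; rewrite eqEsubset sBE andbT.
  by rewrite -disjoints_subset.
Qed.

Lemma phi0_empty_premise (b : T) :
  phi Sigma set0 = set0 -> (set0, b) \notin Sigma.
Proof.
move=> phi0; apply/negP => Sb.
have : b \in phi Sigma set0.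
  apply/bigcapP => C; rewrite inE => /andP [/forallP /(_ (set0, b))].
  by rewrite Sb sub0set.
by rewrite phi0 inE.
Qed.

Variable rho : T -> nat.
Hypothesis rank_rho : is_rank Sigma rho.

Lemma rank_conclusion_lt_max (A : {set T}) (b : T) :
  (A, b) \in Sigma -> A != set0 -> rho b < max_rank rho.
Proof.
move=> Sb /set0Pn [a aA]; rewrite -(rank_rho Sb aA).
exact: leq_bigmax.
Qed.

Lemma closed_setC_max_rank (B : {set T}) :
  phi Sigma set0 = set0 -> {in B, forall x, rho x = max_rank rho} ->
  closedb Sigma (~: B).
Proof.
move=> phi0 maxB; apply/forallP => -[A b]; apply/implyP => Sb; apply/implyP => _.
rewrite inE; apply/negP => bB.
have [A0 | nzA] := eqVneq A set0.
  by move: Sb; rewrite A0; apply/negP/phi0_empty_premise.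
by have := rank_conclusion_lt_max Sb nzA; rewrite (maxB b) // ltnn.
Qed.

End ClosedComplement.

Theorem proposition7 (T : finType) (Sigma : {set implication T}) (rho : T -> nat)
  (hrank : is_rank Sigma rho) (hcg : convex_geometry Sigma)
  (B : {set T}) (hB : forall x, x \in B -> rho x = max_rank rho) :
  maxdisj Sigma B = [set [set x | (rho x <= max_rank rho) && (x \notin B)]].
Proof.
have -> : [set x | (rho x <= max_rank rho) && (x \notin B)] = ~: B.
  by apply/setP => x; rewrite !inE leq_bigmax.
exact/maxdisj_closed_setC/(closed_setC_max_rank hrank (proj1 hcg)).
Qed.
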